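(* Let $(\mathcal{C},\mathbb{E},\mathfrak{s})$ satisfy (ET1) and (ET2), let $\mathcal{I}$ be an ideal of $\mathcal{C}$ and $C\in\mathcal{C}$. Then every special $\mathcal{I}$-precover of $C$ is an $\mathcal{I}$-precover of $C$.
   Context: $\mathcal{C}$ is additive and $\mathbb{E}:\mathcal{C}^{\mathrm{op}}\times\mathcal{C}\to\mathrm{Ab}$ biadditive (ET1). For $\delta\in\mathbb{E}(C,A)$, $a:A\to A'$, $c:C'\to C$ write $a_\star\delta=\mathbb{E}(C,a)(\delta)$, $c^\star\delta=\mathbb{E}(c,A)(\delta)$. (ET2): $\mathfrak{s}$ is an additive realization of $\mathbb{E}$ in the sense of Nakaoka–Palu: it assigns to each $\delta\in\mathbb{E}(C,A)$ an equivalence class of sequences $A\xrightarrow{x}B\xrightarrow{y}C$ (equivalent if there is an isomorphism of middle terms commuting with the maps), the zero element is realized by split sequences $A\to A\oplus C\to C$, $\mathfrak{s}(\delta\oplus\delta')=\mathfrak{s}(\delta)\oplus\mathfrak{s}(\delta')$, and whenever $\delta\in\mathbb{E}(C,A)$, $\delta'\in\mathbb{E}(C',A')$, $a:A\to A'$, $c:C\to C'$ satisfy $a_\star\delta=c^\star\delta'$, there is $b:B\to B'$ making the realizing sequences into a commutative diagram. A realized pair is an $\mathbb{E}$-triangle $A\xrightarrow{x}B\xrightarrow{y}C\overset{\delta}{\dashrightarrow}$, and such a triple $(a,b,c)$ is a morphism of $\mathbb{E}$-triangles. An ideal is a class of morphisms containing zeros, closed under sums and composition with arbitrary morphisms. $\mathcal{I}^{\perp_{\mathbb{E}}}$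 is the class of $g:A\to Y$ with $m^\star g_\star\delta=0$ for all $m\in\mathcal{I}$, $m:X\to C$, $\delta\in\mathbb{E}(C,A)$. An $\mathcal{I}$-precover of $C$ is $i:X\to C$ in $\mathcal{I}$ through which every morphism $X'\to C$ in $\mathcal{I}$ factors. A special $\mathcal{I}$-precover of $C$ is $i:X\to C$ in $\mathcal{I}$ for which there exist $\mathbb{E}$-triangles $A\to B\to C\overset{\delta}{\dashrightarrow}$ and $A'\to X\xrightarrow{i}C\overset{\delta'}{\dashrightarrow}$ and a morphism of $\mathbb{E}$-triangles $(j,b,\mathrm{id}_C)$ from the first to the second with $j\in\mathcal{I}^{\perp_{\mathbb{E}}}$. *)

From HB Require Import structures.
From mathcomp Require Import all_boot all_algebra.
Set Implicit Arguments. Unset Strict Implicit. Unset Printing Implicit Defensive.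
Import GRing.Theory.
Local Open Scope ring_scope.

Record AddCat := {
  obj :> Type;
  Mor : obj -> obj -> zmodType;
  idm : forall A, Mor A A;
  comp : forall A B C, Mor B C -> Mor A B -> Mor A C;
  compA : forall A B C D (h : Mor C D) (g : Mor B C) (f : Mor A B),
      comp h (comp g f) = comp (comp h g) f;
  comp1m : forall A B (f : Mor A B), comp (idm B) f = f;
  compm1 : forall A B (f : Mor A B), comp f (idm A) = f;
  compDl : forall A B C (g g' : Mor B C) (f : Mor A B),
      comp (g + g') f = comp g f + comp g' f;
  compDr : forall A B C (g : Mor B C) (f f' : Mor A B),
      comp g (f + f') = comp g f + comp g f';
  zobj : obj;
  zobj_zero : idm zobj = 0;
  bp : obj -> obj -> obj;
  bp_i1 : forall A C, Mor A (bp A C);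
  bp_i2 : forall A C, Mor C (bp A C);
  bp_p1 : forall A C, Mor (bp A C) A;
  bp_p2 : forall A C, Mor (bp A C) C;
  bp_p1i1 : forall A C, comp (bp_p1 A C) (bp_i1 A C) = idm A;
  bp_p2i2 : forall A C, comp (bp_p2 A C) (bp_i2 A C) = idm C;
  bp_p1i2 : forall A C, comp (bp_p1 A C) (bp_i2 A C) = 0;
  bp_p2i1 : forall A C, comp (bp_p2 A C) (bp_i1 A C) = 0;
  bp_sum : forall A C, comp (bp_i1 A C) (bp_p1 A C) + comp (bp_i2 A C) (bp_p2 A C)
                       = idm (bp A C)
}.

Arguments Mor {_} _ _.
Arguments idm {_} _.
Arguments comp {_ A B C} _ _.
Arguments bp {_} _ _.
Arguments bp_i1 {_} _ _. Arguments bp_i2 {_} _ _. Arguments bp_p1 {_} _ _. Arguments bp_p2 {_} _ _.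

Section Defs.
Variable Cc : AddCat.

Definition is_iso (A B : Cc) (f : Mor A B) : Prop :=
  exists g : Mor B A, comp g f = idm A /\ comp f g = idm B.

Definition mor_oplus (A A' B B' : Cc) (f : Mor A B) (g : Mor A' B') :
  Mor (bp A A') (bp B B') :=
  comp (bp_i1 B B') (comp f (bp_p1 A A')) + comp (bp_i2 B B') (comp g (bp_p2 A A')).

(* (ET1): a biadditive functor E : C^op x C -> Ab.                    *)
(* Ext C A = E(C,A); push a = a_*, pull c = c^*.                       *)
Record Biadd := {
  Ext : Cc -> Cc -> zmodType;
  push : forall (C A A' : Cc), Mor A A' -> Ext C A -> Ext C A';
  pull : forall (C' C A : Cc), Mor C' C -> Ext C A -> Ext C' A;
  push_id : forall C A (d : Ext C A), push (idm A) d = d;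
  pull_id : forall C A (d : Ext C A), pull (idm C) d = d;
  push_comp : forall C A A' A'' (a : Mor A A') (a' : Mor A' A'') (d : Ext C A),
      push (comp a' a) d = push a' (push a d);
  pull_comp : forall C C' C'' A (c : Mor C' C) (c' : Mor C'' C') (d : Ext C A),
      pull (comp c c') d = pull c' (pull c d);
  push_pull : forall C C' A A' (a : Mor A A') (c : Mor C' C) (d : Ext C A),
      push a (pull c d) = pull c (push a d);
  push_addE : forall C A A' (a : Mor A A') (d d' : Ext C A),
      push a (d + d') = push a d + push a d';
  pull_addE : forall C' C A (c : Mor C' C) (d d' : Ext C A),
      pull c (d + d') = pull c d + pull c d';
  push_addm : forall C A A' (a a' : Mor A A') (d : Ext C A),
      push (a + a') d = push a d + push a' d;
  pull_addm : forall C' C A (c c' : Mor C' C) (d : Ext C A),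
      pull (c + c') d = pull c d + pull c' d
}.

Arguments push {_ C A A'} _ _.
Arguments pull {_ C' C A} _ _.

Variable E : Biadd.

Definition ext_oplus (C A C' A' : Cc) (d : Ext E C A) (d' : Ext E C' A') :
  Ext E (bp C C') (bp A A') :=
  push (bp_i1 A A') (pull (bp_p1 C C') d) + push (bp_i2 A A') (pull (bp_p2 C C') d').

(* A realization: s delta x y means A -x-> B -y-> C belongs to the class s(delta). *)
Definition realizer := forall (C A : Cc), Ext E C A -> forall B : Cc, Mor A B -> Mor B C -> Prop.

Definition seq_equiv (A B B' C : Cc) (x : Mor A B) (y : Mor B C)
  (x' : Mor A B') (y' : Mor B' C) : Prop :=
  exists b : Mor B B', is_iso b /\ comp b x = x' /\ comp y' b = y.

(* (ET2): s is an additive realization of E (Nakaoka--Palu). *)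
Record additive_realization (s : realizer) : Prop := {
  real_ex : forall (C A : Cc) (d : Ext E C A),
      exists (B : Cc) (x : Mor A B) (y : Mor B C), s _ _ d _ x y;
  real_class : forall (C A B B' : Cc) (d : Ext E C A) (x : Mor A B) (y : Mor B C)
      (x' : Mor A B') (y' : Mor B' C),
      s _ _ d _ x y -> (s _ _ d _ x' y' <-> seq_equiv x y x' y');
  real_mor : forall (C A C' A' B B' : Cc) (d : Ext E C A) (d' : Ext E C' A')
      (a : Mor A A') (c : Mor C C')
      (x : Mor A B) (y : Mor B C) (x' : Mor A' B') (y' : Mor B' C'),
      push a d = pull c d' -> s _ _ d _ x y -> s _ _ d' _ x' y' ->
      exists b : Mor B B', comp b x = comp x' a /\ comp y' b = comp c y;
  real_zero : forall (A C : Cc), s _ _ (0 : Ext E C A) _ (bp_i1 A C) (bp_p2 A C);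
  real_sum : forall (C A C' A' B B' : Cc) (d : Ext E C A) (d' : Ext E C' A')
      (x : Mor A B) (y : Mor B C) (x' : Mor A' B') (y' : Mor B' C'),
      s _ _ d _ x y -> s _ _ d' _ x' y' ->
      s _ _ (ext_oplus d d') _ (mor_oplus x x') (mor_oplus y y')
}.

Definition morclass := forall (X Y : Cc), Mor X Y -> Prop.

Record is_ideal (I : morclass) : Prop := {
  ideal0 : forall X Y : Cc, I X Y 0;
  idealD : forall (X Y : Cc) (f g : Mor X Y), I X Y f -> I X Y g -> I X Y (f + g);
  idealM : forall (W X Y Z : Cc) (h : Mor Y Z) (f : Mor X Y) (g : Mor W X),
      I X Y f -> I W Z (comp h (comp f g))
}.

Definition perpE (I : morclass) (A Y : Cc) (g : Mor A Y) : Prop :=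
  forall (X C : Cc) (m : Mor X C), I X C m ->
  forall d : Ext E C A, pull m (push g d) = 0.

Definition precover (I : morclass) (X C : Cc) (i : Mor X C) : Prop :=
  I X C i /\
  forall (X' : Cc) (f : Mor X' C), I X' C f -> exists h : Mor X' X, comp i h = f.

Definition special_precover (s : realizer) (I : morclass) (X C : Cc) (i : Mor X C) : Prop :=
  I X C i /\
  exists (A B A' : Cc) (x : Mor A B) (y : Mor B C) (d : Ext E C A)
         (x' : Mor A' X) (d' : Ext E C A') (j : Mor A A') (b : Mor B X),
    s C A d B x y /\ s C A' d' X x' i /\
    (* (j, b, id_C) is a morphism of E-triangles *)
    comp b x = comp x' j /\ comp i b = comp (idm C) y /\
    push j d = pull (idm C) d' /\
    perpE I j.

End Defs.

(** Let [A' -> X -i-> C] realize [d'] and let [f : X' -> C] lie in the ideal.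
    Since [d' = j_* d] with [j] in the right [E]-orthogonal of the ideal,
    [f^* d' = f^* j_* d = 0]; a morphism of [E]-triangles from the split
    triangle realizing [0 : E(X', A')] then yields [b' : A' (+) X' -> X] with
    [i b' = f p2], and [b'] composed with the inclusion of [X'] lifts [f]. *)
From Pilot Require Import Defs.
From mathcomp Require Import all_boot all_algebra.
Set Implicit Arguments. Unset Strict Implicit. Unset Printing Implicit Defensive.

Section Realization.
Variables (Cc : AddCat) (E : Biadd Cc) (s : realizer E).
Hypothesis Hs : additive_realization s.

Lemma pull_eq0_lift (C A X X' : Cc) (d : Ext E C A) (x : Mor A X) (y : Mor X C)
    (f : Mor X' C) :
  s d x y -> pull f d = 0%R -> exists h : Mor X' X, Defs.comp y h = f.
Proof.
move=> sd fd0.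
have push0 : push (idm A) (0%R : Ext E X' A) = pull f d by rewrite push_id fd0.
have [b [_ yb]] := real_mor Hs push0 (real_zero Hs A X') sd.
exists (Defs.comp b (bp_i2 A X')).
by rewrite Defs.compA yb -Defs.compA bp_p2i2 compm1.
Qed.

End Realization.

Theorem proposition3p6 (Cc : AddCat) (E : Biadd Cc) (s : realizer E)
  (Hs : additive_realization s) (I : morclass Cc) (HI : is_ideal I)
  (C X : Cc) (i : Mor X C) :
  special_precover s I i -> precover I i.
Proof.
move=> [Ii [A [B [A' [x [y [d [x' [d' [j [b special]]]]]]]]]]].
move: special => [_ [sd' [_ [_ [jd perp_j]]]]].
split=> // X' f If.
apply: (pull_eq0_lift Hs sd').
rewrite pull_id in jd.
by rewrite -jd; exact: perp_j.
Qed.
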